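(* Let $D$ be a directed acyclic graph with $n$ nodes and exactly one source. Then the burning number of $D$ is at most $\left\lceil \sqrt{2n+\tfrac14}-\tfrac12\right\rceil$.
   Context: Burning process on a digraph $D$: a sequence $(x_1,\ldots,x_b)$ of nodes is a burning sequence for $D$ if after $b$ steps of the following process every node of $D$ is burned; the $i$-th step consists of first burning all out-neighbours of all currently burned nodes, and then burning the node $x_i$. The burning number of $D$ is the length of a shortest burning sequence. Equivalently, with $N^+_k(v)$ the set of nodes reachable from $v$ by a directed path with at most $k$ arcs, the burning number is the least $b$ such that there are nodes $v_1,\ldots,v_b$ with $V(D)=\bigcup_{i=1}^b N^+_{i-1}(v_i)$. *)

From HB Require Import structures.
From mathcomp Require Import all_boot all_order all_algebra.
From mathcomp Require Import reals.
Set Implicit Arguments. Unset Strict Implicit. Unset Printing Implicit Defensive.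

(* A digraph is a finite type of nodes T with an arc relation e : rel T
   (e u v means there is an arc u -> v). *)

Fixpoint out_ball (T : finType) (e : rel T) (k : nat) (v : T) : {set T} :=
  match k with
  | 0 => [set v]
  | k'.+1 => out_ball e k' v :|:
             \bigcup_(u in out_ball e k' v) [set w | e u w]
  end.

(* (v_1,...,v_b) (stored 0-indexed in the tuple s, v_{i+1} = tnth s i)
   is a burning sequence iff V = U_{i=1..b} N^+_{i-1}(v_i). *)
Definition burning_seq (T : finType) (e : rel T) (b : nat) (s : b.-tuple T) : bool :=
  [forall x : T, [exists i : 'I_b, x \in out_ball e i (tnth s i)]].

Definition has_burning_seq (T : finType) (e : rel T) (b : nat) : bool :=
  [exists s : b.-tuple T, burning_seq e s].

Lemma has_burning_seq_exists (T : finType) (e : rel T) :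
  exists b, has_burning_seq e b.
Proof.
exists (size (enum T)); apply/existsP; exists (in_tuple (enum T)).
apply/forallP => x; apply/existsP.
have Hx : index x (enum T) < size (enum T) by rewrite index_mem mem_enum.
exists (Ordinal Hx); rewrite (tnth_nth x) /= nth_index ?mem_enum //.
by elim: (index _ _) => [|k IH] /=; rewrite ?in_set1 // in_setU IH.
Qed.

Definition burning_number (T : finType) (e : rel T) : nat :=
  ex_minn (has_burning_seq_exists e).

Definition acyclic (T : finType) (e : rel T) : Prop :=
  forall (x : T) (p : seq T), path e x p -> last x p = x -> p = [::].

Definition is_source (T : finType) (e : rel T) (s : T) : Prop :=
  forall u : T, ~~ e u s.

(* Write n = #|T| and let b be least with 2n <= b(b+1), which is the ceiling in
   the statement.  All nodes are reached from the unique source s.  Take a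
   longest path from s; if it has at most b - 1 arcs, s alone burns everything
   by step b.  Otherwise let v be its node b - 1 arcs before the end: by
   maximality every node reachable from v is within distance b - 1 of v, and
   there are at least b of them.  Burn v last, delete what v reaches (the rest
   stays reachable from s avoiding the deleted nodes) and recurse with b - 1,
   since 2(n - b) <= (b - 1) b. *)

From HB Require Import structures.
From mathcomp Require Import all_boot all_order all_algebra.
From mathcomp Require Import reals.
From mathcomp Require Import zify lra.
Import Order.TTheory GRing.Theory Num.Theory.
Set Implicit Arguments. Unset Strict Implicit. Unset Printing Implicit Defensive.

Section Acyclic.

Variables (T : finType) (r : rel T).
Hypothesis acyclic_r : acyclic r.

Lemma acyclic_path_notin x p : path r x p -> x \notin p.
Proof.
move=> pp; apply/negP => xp; move: pp; case/splitPr: xp => p1 p2.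
rewrite cat_path /= => /and3P [pp1 rx _].
have := acyclic_r (x := x) (p := rcons p1 x).
rewrite rcons_path pp1 rx last_rcons => /(_ erefl erefl) /eqP.
by rewrite -size_eq0 size_rcons.
Qed.

Lemma acyclic_path_uniq x p : path r x p -> uniq (x :: p).
Proof.
elim: p x => [|y p IH] x // pp.
by rewrite cons_uniq acyclic_path_notin // IH //; case/andP: pp.
Qed.

Lemma acyclic_size_path_lt_card x p :
  path r x p -> size p < #|[set y | connect r x y]|.
Proof.
move=> pp; have <- : #|x :: p| = (size p).+1.
  by rewrite (card_uniqP (acyclic_path_uniq pp)).
by apply/subset_leq_card/subsetP => y /(path_connect pp); rewrite inE.
Qed.

Lemma acyclic_longest_path x :
  exists2 p, path r x p & forall q, path r x q -> size q <= size p.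
Proof.
pose has_path k := [exists p : k.-tuple T, path r x p].
have has_path0 : exists k, has_path k by exists 0; apply/existsP; exists [tuple].
have has_path_bounded k : has_path k -> k <= #|T|.
  case/existsP => p /acyclic_size_path_lt_card; rewrite size_tuple => lt_k.
  exact/ltnW/(leq_trans lt_k)/max_card.
have [L /existsP [p pp] maxL] := ex_maxnP has_path0 has_path_bounded.
exists p => // q pq; rewrite size_tuple; apply: maxL.
by apply/existsP; exists (in_tuple q).
Qed.

Lemma acyclic_connect_from_source x : exists2 y, is_source r y & connect r y x.
Proof.
have [m] := ubnP #|[set y | connect r y x]|; elim: m x => // m IH x.
rewrite ltnS => card_lt.
have [/existsP [u rux] | /existsPn src] := boolP [exists u, r u x]; last by exists x.
have ancestors_proper : [set y | connect r y u] \proper [set y | connect r y x].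
  apply/properP; split.
    apply/subsetP => y; rewrite !inE => cyu.
    exact: connect_trans cyu (connect1 rux).
  exists x; rewrite !inE ?connect0 //; apply/connectP => -[p pp lu].
  have := acyclic_path_notin (x := x) (p := rcons p x).
  by rewrite rcons_path pp -lu rux mem_rcons mem_head => /(_ isT).
have [y src_y cyu] := IH u (leq_trans (proper_card ancestors_proper) card_lt).
by exists y => //; exact: connect_trans cyu (connect1 rux).
Qed.

End Acyclic.

Section Burning.

Variables (T : finType) (e : rel T).
Implicit Types (S : {set T}) (s v x y : T) (p : seq T).

Lemma mem_out_ball_path v k p :
  path e v p -> size p <= k -> last v p \in out_ball e k v.
Proof.
elim: k p => [|k IH] p; first by case: p => //= _ _; rewrite in_set1.
case/lastP: p => [|p y]; first by move=> _ _; apply/setUP; left; apply: (IH [::]).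
rewrite rcons_path size_rcons last_rcons ltnS => /andP [pp ey] size_p.
by apply/setUP; right; apply/bigcupP; exists (last v p); rewrite ?inE ?IH.
Qed.

Definition burned b (t : b.-tuple T) : {set T} :=
  \bigcup_(i < b) out_ball e i (tnth t i).

Lemma burned_rcons b (t : b.-tuple T) v :
  burned [tuple of rcons t v] = burned t :|: out_ball e b v.
Proof.
rewrite /burned big_ord_recr /=; congr (_ :|: out_ball e b _).
  apply: eq_bigr => i _; congr (out_ball e i _).
  by rewrite (tnth_nth v) /= nth_rcons size_tuple ltn_ord -tnth_nth.
by rewrite (tnth_nth v) /= nth_rcons size_tuple ltnn eqxx.
Qed.

Lemma burning_number_le b (t : b.-tuple T) :
  [set: T] \subset burned t -> burning_number e <= b.
Proof.
move=> /subsetP burnedT; rewrite /burning_number; case: ex_minnP => m _; apply.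
apply/existsP; exists t; apply/forallP => x; apply/existsP.
by have /bigcupP [i _ xi] := burnedT x (in_setT x); exists i.
Qed.

Definition arcs_into (S : {set T}) : rel T := [rel x y | e x y && (y \in S)].

Lemma path_arcs_intoE S x p :
  path (arcs_into S) x p = path e x p && all (mem S) p.
Proof.
elim: p x => [|y p IH] x //=; rewrite IH -!andbA; congr (_ && _).
by rewrite andbCA.
Qed.

Lemma acyclic_arcs_into S : acyclic e -> acyclic (arcs_into S).
Proof. by move=> acyclic_e x p; rewrite path_arcs_intoE => /andP [/acyclic_e]. Qed.

Lemma connect_arcs_into_closed S x y :
  x \in S -> connect (arcs_into S) x y -> y \in S.
Proof.
move=> xS /connectP [p]; rewrite path_arcs_intoE => /andP [_ /allP pS] ->.
by have := mem_last x p; rewrite inE => /predU1P [-> | /pS].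
Qed.

Lemma out_ball_connect_arcs_into S v k x :
  (forall p, path (arcs_into S) v p -> size p <= k) ->
  connect (arcs_into S) v x -> x \in out_ball e k v.
Proof.
move=> short /connectP [p pp ->]; apply: mem_out_ball_path (short _ pp).
by move: pp; rewrite path_arcs_intoE => /andP [].
Qed.

(* Only the targets of arcs are constrained, so s itself need not lie in S. *)
Definition rooted (s : T) (S : {set T}) : Prop :=
  forall x, x \in S -> connect (arcs_into S) s x.

Lemma rooted_setD s S v :
  rooted s S -> rooted s (S :\: [set y | connect (arcs_into S) v y]).
Proof.
move=> rootS x; rewrite !inE => /andP [not_vx xS].
have /connectP [p pp x_last] := rootS x xS; apply/connectP; exists p => //.
move: (pp); rewrite !path_arcs_intoE => /andP [-> /allP pS] /=.
apply/allP => y yp; rewrite !inE; apply/andP; split; last exact: pS.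
apply: contra not_vx => vy.
apply: connect_trans vy _; rewrite x_last; move: pp; case/splitPr: yp => p1 p2.
by rewrite cat_path last_cat => /and3P [_ _ pp2]; apply/connectP; exists p2.
Qed.

Hypothesis acyclic_e : acyclic e.

Lemma rooted_split_ball s b S :
  rooted s S -> #|S| * 2 <= b.+1 * b.+2 ->
  exists v S', [/\ rooted s S', #|S'| * 2 <= b * b.+1
                 & S \subset S' :|: out_ball e b v].
Proof.
move=> rootS card_S; pose E := arcs_into S.
have acyclic_E : acyclic E by apply: acyclic_arcs_into.
have [p ps longest] := acyclic_longest_path acyclic_E s.
have [short | long] := leqP (size p) b.
  exists s, set0; rewrite cards0 set0U; split => //; first by move=> ?; rewrite inE.
  apply/subsetP => x /rootS; apply: out_ball_connect_arcs_into => q /longest.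
  by move/leq_trans; apply.
have [p1 [p2 [def_p size_p2]]] : exists p1 p2, p = p1 ++ p2 /\ size p2 = b.
  exists (take (size p - b) p), (drop (size p - b) p).
  by rewrite cat_take_drop size_drop; split => //; lia.
move: ps longest long; rewrite def_p cat_path size_cat size_p2.
case: p1 {def_p} => [|y p1]; first by rewrite ltnn.
move=> /andP [ps1 ps2] longest _ /=; set v := last y p1.
set R := [set x | connect E v x].
have vS : v \in S.
  by move: ps1; rewrite path_arcs_intoE => /andP [_ /allP]; apply; exact: mem_last.
have R_S : R \subset S.
  by apply/subsetP => x; rewrite inE; exact: connect_arcs_into_closed.
have R_ball : R \subset out_ball e b v.
  apply/subsetP => x; rewrite inE; apply: out_ball_connect_arcs_into => q pq.
  have := longest (y :: p1 ++ q); rewrite -cat_cons cat_path ps1 pq size_cat /=.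
  by move=> /(_ isT); lia.
have card_R : b < #|R| by rewrite -size_p2; exact: acyclic_size_path_lt_card ps2.
exists v, (S :\: R); split; first exact: rooted_setD.
  by rewrite cardsDS //; nia.
apply/subsetP => x xS; rewrite in_setU in_setD xS andbT.
by case: (boolP (x \in R)) => [/(subsetP R_ball) -> |].
Qed.

Lemma rooted_subset_burned s b S :
  rooted s S -> #|S| * 2 <= b * b.+1 -> exists t : b.-tuple T, S \subset burned t.
Proof.
elim: b S => [|b IH] S rootS card_S.
  exists [tuple]; suff -> : S = set0 by exact: sub0set.
  by apply/eqP; rewrite -cards_eq0; lia.
have [v [S' [rootS' card_S' S_sub]]] := rooted_split_ball rootS card_S.
have [t S'_sub] := IH S' rootS' card_S'.
by exists [tuple of rcons t v]; rewrite burned_rcons (subset_trans S_sub) ?setSU.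
Qed.

End Burning.

Lemma connect_arcs_intoT (T : finType) (e : rel T) :
  connect (arcs_into e [set: T]) =2 connect e.
Proof. by apply: eq_connect => x y; rewrite /arcs_into /= in_setT andbT. Qed.

Local Open Scope ring_scope.

Lemma triangular_ceil_sqrt (R : realType) (n : nat) :
  exists2 k : nat, k%:Z = Num.ceil (Num.sqrt (2 * n%:R + 1 / 4) - 1 / 2 : R)
                 & (n * 2 <= k * k.+1)%N.
Proof.
set a : R := 2 * n%:R + 1 / 4; set r := Num.sqrt a.
have a_ge : 1 / 4 <= a by rewrite lerDr mulr_ge0.
have r_ge0 : 0 <= r := sqrtr_ge0 a.
have r2 : r ^+ 2 = a by apply: sqr_sqrtr; apply: le_trans a_ge; lra.
have c_ge0 : 0 <= Num.ceil (r - 1 / 2).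
  by rewrite ceil_ge0 (@lt_le_trans _ _ 0) ?ltrN10 //; nra.
exists `|Num.ceil (r - 1 / 2)|%N; first by rewrite gez0_abs.
have := ceil_ge (r - 1 / 2); rewrite -{1}(gez0_abs c_ge0) pmulrn.
set k := `|_|%N => r_le; rewrite -(ler_nat R) !natrM -addn1 natrD.
by rewrite /a in r2; nra.
Qed.

Theorem mainTheorem5 (R : realType) (T : finType) (e : rel T)
  (Hacyc : acyclic e)
  (Hsrc : exists s : T, is_source e s /\ forall t : T, is_source e t -> t = s) :
  ((burning_number e)%:Z <=
     Num.ceil (Num.sqrt (2 * (#|T|%:R : R) + 1 / 4) - 1 / 2))%R.
Proof.
have [s [_ unique_source]] := Hsrc.
have rootT : rooted e s [set: T].
  move=> x _; rewrite connect_arcs_intoT.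
  by have [y /unique_source -> ] := acyclic_connect_from_source Hacyc x.
have [k <- card_T] := triangular_ceil_sqrt R #|T|.
rewrite -cardsT in card_T.
have [t burned_T] := rooted_subset_burned Hacyc rootT card_T.
by rewrite lez_nat (burning_number_le burned_T).
Qed.
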